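(* Fix $p\in(0,1)$, $\lambda\in[0,1]$, an integer $B>1$, $\omega>0$, $C_r\ge 0$, and let $V$ be the value function (as described in the context). Then: (i) for every $q\in\{0,1,\dots,B\}$ and all integers $1\le\Delta_1\le\Delta_2$, $V(\Delta_2,q)-V(\Delta_1,q)\ge \Delta_2-\Delta_1$; (ii) for every $q\in\{0,1,\dots,B-1\}$ and every $\Delta\in\mathbb Z^+$, $V(\Delta+1,q+1)-V(\Delta,q+1)\ge p\,[V(\Delta+1,q)-V(\Delta,q)]$.
   Context: System model. Time is slotted. State space $\mathcal S=\mathbb Z^+\times\{0,1,\dots,B\}$; a state $\mathbf x=(\Delta,q)$ consists of the Age of Information $\Delta\in\mathbb Z^+=\{1,2,\dots\}$ and the battery level $q$. Action set $\mathcal A=\{0,1\}$ ($a=1$: generate and transmit an update; $a=0$: idle). Let $u(x)=1$ if $x>0$ and $u(x)=0$ otherwise. Transitions: given state $(\Delta,q)$ and action $a$, draw independently $b\sim\mathrm{Bernoulli}(\lambda)$ (harvested energy arrival) and, if $a=1$, a success indicator $s\sim\mathrm{Bernoulli}(1-p)$ (the update is erased with probability $p$); if $a=0$ set $s=0$. The next state is $(\Delta',q')$ with $\Delta'=1$ if $s=1$ and $\Delta'=\Delta+1$ otherwise, and $q'=\min\{q+b-a\,u(q),\,B\}$. One-step cost: $C(\mathbf x,a)=\Delta+\omega C_r\,a\,(1-u(q))$ (transmitting with empty battery uses paid backup energy at cost $C_r$, weighted by $\omega$). Value iteration: $V_0(\mathbf x)=0$ for all $\mathbf x$; for $k\ge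 0$, $Q_k(\mathbf x,a)=C(\mathbf x,a)+\sum_{\mathbf x'\in\mathcal S}\Pr(\mathbf x'\mid\mathbf x,a)V_k(\mathbf x')$ and $V_{k+1}(\mathbf x)=\min_{a\in\mathcal A}Q_k(\mathbf x,a)$. Value function: $V:\mathcal S\to\mathbb R$ together with a constant $g\in\mathbb R$ satisfies the average-cost Bellman equation $g+V(\mathbf x)=\min_{a\in\mathcal A}\{C(\mathbf x,a)+\sum_{\mathbf x'}\Pr(\mathbf x'\mid\mathbf x,a)V(\mathbf x')\}$ for all $\mathbf x\in\mathcal S$, and $V$ is obtained from value iteration in the sense that $V(\mathbf x)=\lim_{k\to\infty}(V_k(\mathbf x)-c_k)$ pointwise for some real constants $c_k$. Write $Q(\mathbf x,a)=C(\mathbf x,a)+\sum_{\mathbf x'}\Pr(\mathbf x'\mid\mathbf x,a)V(\mathbf x')$. *)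

From Stdlib Require Import Reals Lra Lia Arith.
Open Scope R_scope.

(* Actions, energy arrivals and success indicators are encoded as bools;
   nat_of_bool true = 1, false = 0. *)
Definition nb (x : bool) : nat := if x then 1%nat else 0%nat.

Definition u (q : nat) : nat := if Nat.eqb q 0 then 0%nat else 1%nat.

Definition next_q (B q : nat) (a b : bool) : nat :=
  Nat.min (q + nb b - nb a * u q)%nat B.

Definition next_D (D : nat) (s : bool) : nat := if s then 1%nat else S D.

Definition cost (omega Cr : R) (D q : nat) (a : bool) : R :=
  INR D + omega * Cr * INR (nb a) * (1 - INR (u q)).

Definition prob_b (lam : R) (b : bool) : R := if b then lam else 1 - lam.

Definition prob_s (p : R) (a s : bool) : R :=
  if a then (if s then 1 - p else p) else (if s then 0 else 1).

(* sum_{x'} Pr(x' | x, a) W(x'), written out over the independent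
   outcomes (b, s) that determine x' *)
Definition EV (p lam : R) (B : nat) (W : nat -> nat -> R) (D q : nat) (a : bool) : R :=
  prob_b lam true * (prob_s p a true * W (next_D D true) (next_q B q a true)
                   + prob_s p a false * W (next_D D false) (next_q B q a true))
  + prob_b lam false * (prob_s p a true * W (next_D D true) (next_q B q a false)
                   + prob_s p a false * W (next_D D false) (next_q B q a false)).

Definition Qf (p lam : R) (B : nat) (omega Cr : R) (W : nat -> nat -> R)
  (D q : nat) (a : bool) : R :=
  cost omega Cr D q a + EV p lam B W D q a.

Fixpoint VI (p lam : R) (B : nat) (omega Cr : R) (k : nat) : nat -> nat -> R :=
  match k with
  | O => fun _ _ => 0
  | S k' => fun D q => Rmin (Qf p lam B omega Cr (VI p lam B omega Cr k') D q false)
                            (Qf p lam B omega Cr (VI p lam B omega Cr k') D q true)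
  end.

Definition in_S (B D q : nat) : Prop := (1 <= D)%nat /\ (q <= B)%nat.

(* V is "the value function": it solves the average-cost Bellman equation
   on S for some g, and is a pointwise limit of V_k - c_k on S. *)
Definition is_value_function (p lam : R) (B : nat) (omega Cr : R)
  (V : nat -> nat -> R) : Prop :=
  (exists g : R, forall D q, in_S B D q ->
      g + V D q = Rmin (Qf p lam B omega Cr V D q false) (Qf p lam B omega Cr V D q true))
  /\ (exists c : nat -> R, forall D q, in_S B D q ->
      Un_cv (fun k => VI p lam B omega Cr k D q - c k) (V D q)).

From Stdlib Require Import Reals Lra Lia.
Open Scope R_scope.

(* Write incr W D q := W(D+1,q) - W(D,q).  Raising the AoI raises the cost by 1
   and, after a failed update, the next AoI by 1, so for either action
   Q_W(D+1,q,a) - Q_W(D,q,a) = 1 + Pr(s = 0 | a) E[incr W (D+1) q'].  Moreover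
   transmitting from battery level q+1 leads to the same battery levels as
   idling from q.  Together these show that the Bellman operator maps functions
   with nonnegative increments satisfying incr W D (q+1) >= p incr W D q to
   functions with increments >= 1 satisfying the same ratio bound.  Every
   value-iteration iterate V_k, k >= 1, therefore has both properties, and they
   pass to V = lim (V_k - c_k) because the constants c_k cancel in increments. *)

Lemma Rmin_sub_ge a1 b1 a2 b2 : Rmin (a2 - a1) (b2 - b1) <= Rmin a2 b2 - Rmin a1 b1.
Proof. unfold Rmin; repeat destruct Rle_dec; lra. Qed.

Lemma Rmin_sub_le a1 b1 a2 b2 : Rmin a2 b2 - Rmin a1 b1 <= Rmax (a2 - a1) (b2 - b1).
Proof. unfold Rmin, Rmax; repeat destruct Rle_dec; lra. Qed.

Lemma Un_cv_const c : Un_cv (fun _ => c) c.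
Proof.
  intros eps Heps. exists 0%nat. intros n _.
  unfold R_dist. rewrite Rminus_diag, Rabs_R0. exact Heps.
Qed.

Lemma Un_cv_lb (v : nat -> R) (l a : R) :
  Un_cv v l -> (forall n, a <= v (S n)) -> a <= l.
Proof.
  intros Hv Hlb. destruct (Rle_lt_dec a l) as [Hle | Hlt]; [exact Hle |].
  destruct (Hv (a - l)) as [N HN]; [lra |].
  specialize (HN (S N) (Nat.le_succ_diag_r N)). specialize (Hlb N).
  unfold R_dist in HN. apply Rabs_def2 in HN. lra.
Qed.

Lemma sub_ge_of_unit_steps (f : nat -> R) (D1 D2 : nat) :
  (forall D, (D1 <= D)%nat -> 1 <= f (S D) - f D) ->
  (D1 <= D2)%nat -> INR D2 - INR D1 <= f D2 - f D1.
Proof.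
  intros Hstep H12. induction H12 as [| D2 H12 IH].
  - lra.
  - rewrite S_INR. pose proof (Hstep D2 H12). lra.
Qed.

Definition incr (W : nat -> nat -> R) (D q : nat) : R := W (S D) q - W D q.

Definition bellman_op (p lam : R) (B : nat) (omega Cr : R) (W : nat -> nat -> R)
  (D q : nat) : R :=
  Rmin (Qf p lam B omega Cr W D q false) (Qf p lam B omega Cr W D q true).

Lemma VI_S p lam B omega Cr k :
  VI p lam B omega Cr (S k) = bellman_op p lam B omega Cr (VI p lam B omega Cr k).
Proof. reflexivity. Qed.

Lemma next_q_le B q a b : (next_q B q a b <= B)%nat.
Proof. unfold next_q; lia. Qed.

Lemma next_q_transmit B q b : next_q B q true b = next_q B (pred q) false b.
Proof. unfold next_q, u, nb; destruct q, b; simpl; lia. Qed.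

Lemma next_q_idle_S B q b :
  next_q B (S q) false b = Nat.min (S (next_q B q false b)) B.
Proof. unfold next_q, nb; destruct b; lia. Qed.

Section ValueIteration.

Variables (p lam : R) (B : nat) (omega Cr : R).
Hypothesis Hp : 0 < p < 1.
Hypothesis Hlam : 0 <= lam <= 1.

Definition mean_incr (W : nat -> nat -> R) (D q : nat) (a : bool) : R :=
  lam * incr W D (next_q B q a true) + (1 - lam) * incr W D (next_q B q a false).

Lemma Qf_incr W D q a :
  Qf p lam B omega Cr W (S D) q a - Qf p lam B omega Cr W D q a
  = 1 + prob_s p a false * mean_incr W (S D) q a.
Proof.
  unfold Qf, cost, EV, mean_incr, incr, next_D, prob_b.
  rewrite S_INR; destruct a; simpl; ring.
Qed.

Definition incr_nonneg (W : nat -> nat -> R) : Prop :=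
  forall D q, (q <= B)%nat -> 0 <= incr W D q.

Definition incr_ratio (W : nat -> nat -> R) : Prop :=
  forall D q, (q < B)%nat -> p * incr W D q <= incr W D (S q).

Section Step.

Variable W : nat -> nat -> R.
Hypothesis W_nonneg : incr_nonneg W.
Hypothesis W_ratio : incr_ratio W.

Lemma mean_incr_nonneg D q a : 0 <= mean_incr W D q a.
Proof.
  unfold mean_incr.
  pose proof (W_nonneg D _ (next_q_le B q a true)).
  pose proof (W_nonneg D _ (next_q_le B q a false)).
  nra.
Qed.

Lemma incr_idle_ratio D q b : (q < B)%nat ->
  p * incr W D (next_q B q false b) <= incr W D (next_q B (S q) false b).
Proof.
  intro Hq. rewrite next_q_idle_S.
  destruct (Nat.lt_ge_cases (next_q B q false b) B) as [Hlt | Hge].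
  - rewrite Nat.min_l by lia. exact (W_ratio D _ Hlt).
  - assert (Heq : next_q B q false b = B) by (pose proof (next_q_le B q false b); lia).
    rewrite Heq, Nat.min_r by lia.
    pose proof (W_nonneg D B (Nat.le_refl B)). nra.
Qed.

Lemma mean_incr_idle_ratio D q : (q < B)%nat ->
  p * mean_incr W D q false <= mean_incr W D (S q) false.
Proof.
  intro Hq. unfold mean_incr.
  pose proof (incr_idle_ratio D q true Hq).
  pose proof (incr_idle_ratio D q false Hq).
  nra.
Qed.

Lemma mean_incr_pred_ratio D q : (q <= B)%nat ->
  p * mean_incr W D (pred q) false <= mean_incr W D q false.
Proof.
  intro Hq. destruct q as [|q].
  - pose proof (mean_incr_nonneg D 0 false). simpl. nra.
  - apply mean_incr_idle_ratio. lia.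
Qed.

Lemma mean_incr_transmit D q : mean_incr W D q true = mean_incr W D (pred q) false.
Proof. unfold mean_incr; rewrite !next_q_transmit; reflexivity. Qed.

Lemma bellman_op_incr_ge1 D q : 1 <= incr (bellman_op p lam B omega Cr W) D q.
Proof.
  unfold incr, bellman_op.
  eapply Rle_trans; [| apply Rmin_sub_ge].
  rewrite !Qf_incr.
  pose proof (mean_incr_nonneg (S D) q false).
  pose proof (mean_incr_nonneg (S D) q true).
  unfold Rmin, prob_s; destruct Rle_dec; nra.
Qed.

Lemma bellman_op_incr_ratio : incr_ratio (bellman_op p lam B omega Cr W).
Proof.
  intros D q Hq. unfold incr, bellman_op.
  eapply Rle_trans; [| apply Rmin_sub_ge].
  eapply Rle_trans; [apply Rmult_le_compat_l; [lra | apply Rmin_sub_le] |].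
  rewrite !Qf_incr, !mean_incr_transmit; simpl pred.
  pose proof (mean_incr_nonneg (S D) (pred q) false).
  pose proof (mean_incr_pred_ratio (S D) q ltac:(lia)).
  pose proof (mean_incr_idle_ratio (S D) q Hq).
  unfold Rmin, Rmax, prob_s; repeat destruct Rle_dec; nra.
Qed.

End Step.

Lemma VI_incr k :
  incr_nonneg (VI p lam B omega Cr k) /\ incr_ratio (VI p lam B omega Cr k).
Proof.
  induction k as [|k [IHnonneg IHratio]].
  - split; intros D q _; unfold incr; simpl; lra.
  - rewrite VI_S. split.
    + intros D q _. pose proof (bellman_op_incr_ge1 _ IHnonneg D q). lra.
    + exact (bellman_op_incr_ratio _ IHnonneg IHratio).
Qed.

Lemma VI_S_incr_ge1 k D q : 1 <= incr (VI p lam B omega Cr (S k)) D q.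
Proof. rewrite VI_S. exact (bellman_op_incr_ge1 _ (proj1 (VI_incr k)) D q). Qed.

End ValueIteration.

Lemma value_function_incr_cv p lam B omega Cr V D q :
  is_value_function p lam B omega Cr V -> (1 <= D)%nat -> (q <= B)%nat ->
  Un_cv (fun k => incr (VI p lam B omega Cr k) D q) (incr V D q).
Proof.
  intros [_ [c Hc]] HD Hq.
  eapply Un_cv_ext;
    [| exact (CV_minus _ _ _ _ (Hc (S D) q ltac:(split; lia)) (Hc D q ltac:(split; lia)))].
  intro k. unfold incr. ring.
Qed.

Theorem lemma2 (p lam : R) (B : nat) (omega Cr : R) (V : nat -> nat -> R) :
  0 < p < 1 -> 0 <= lam <= 1 -> (1 < B)%nat -> 0 < omega -> 0 <= Cr ->
  is_value_function p lam B omega Cr V ->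
  (forall (q D1 D2 : nat), (q <= B)%nat -> (1 <= D1)%nat -> (D1 <= D2)%nat ->
      V D2 q - V D1 q >= INR D2 - INR D1)
  /\ (forall (q D : nat), (q < B)%nat -> (1 <= D)%nat ->
      V (S D) (S q) - V D (S q) >= p * (V (S D) q - V D q)).
Proof.
  intros Hp Hlam _ _ _ HV. split.
  - intros q D1 D2 Hq HD1 H12. apply Rle_ge.
    apply (sub_ge_of_unit_steps (fun D => V D q)); [| exact H12].
    intros D HD.
    apply (Un_cv_lb _ _ _ (value_function_incr_cv _ _ _ _ _ _ D q HV ltac:(lia) Hq)).
    intro k. exact (VI_S_incr_ge1 p lam B omega Cr Hp Hlam k D q).
  - intros q D Hq HD.
    assert (Hcv := CV_minus _ _ _ _
      (value_function_incr_cv _ _ _ _ _ _ D (S q) HV HD Hq)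
      (CV_mult _ _ _ _ (Un_cv_const p)
         (value_function_incr_cv _ _ _ _ _ _ D q HV HD ltac:(lia)))).
    assert (Hlim : 0 <= incr V D (S q) - p * incr V D q).
    { apply (Un_cv_lb _ _ _ Hcv). intro k.
      pose proof (proj2 (VI_incr p lam B omega Cr Hp Hlam (S k)) D q Hq). lra. }
    unfold incr in Hlim. lra.
Qed.
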